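(* Let $k_1=(1,0)$, $k_2=(-\tfrac12,\tfrac{\sqrt3}{2})$, $k_3=(-\tfrac12,-\tfrac{\sqrt3}{2})$, let $\Lambda=\{x\in\mathbb R^2: k_1\cdot x\in2\pi\mathbb Z,\ k_2\cdot x\in2\pi\mathbb Z\}$, let $\phi(x)=\sum_{j=1}^3\cos(k_j\cdot x)$, and for $\varepsilon\in\mathbb R$ let $f_\varepsilon=Z_\varepsilon^{-1}e^{\varepsilon\phi}$ with $Z_\varepsilon=\langle e^{\varepsilon\phi}\rangle$, a probability density on the torus $\mathbb R^2/\Lambda$ with respect to normalized Haar measure. Then, as $\varepsilon\to0$, \[ \mathcal I[f_\varepsilon]=\tfrac32\varepsilon^2+\tfrac34\varepsilon^3+O(\varepsilon^4),\quad \mathcal Q[f_\varepsilon]=\tfrac32\varepsilon^2+\tfrac38\varepsilon^3+O(\varepsilon^4),\quad \mathcal D[f_\varepsilon]=\tfrac32\varepsilon^2-\tfrac3{16}\varepsilon^3+O(\varepsilon^4). \] Consequently \[ \mathcal I[f_\varepsilon]\mathcal D[f_\varepsilon]-\mathcal Q[f_\varepsilon]^2=-\tfrac9{32}\varepsilon^5+O(\varepsilon^6),\qquad \frac{\mathcal I[f_\varepsilon]\mathcal D[f_\varepsilon]}{\mathcal Q[f_\varepsilon]^2}=1-\tfrac18\varepsilon+O(\varepsilon^2), \] so $\mathcal I[f_\varepsilon]\mathcal D[f_\varepsilon]-\mathcal Q[f_\varepsilon]^2<0$ for all sufficiently small $\varepsilon>0$.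
   Context: $\langle G\rangle$ denotes the normalized Haar average of a $\Lambda$-periodic function $G$ (average over a fundamental cell). For a positive smooth density $f=e^u$ on the torus (normalized so $\langle f\rangle=1$), set $\mathsf H_f=-\nabla^2u$ and define $\mathcal I[f]=\langle\operatorname{tr}(\mathsf H_f)f\rangle$, $\mathcal Q[f]=\langle\operatorname{tr}(\mathsf H_f^2)f\rangle$, $\mathcal D[f]=\langle(|\nabla\mathsf H_f|^2+2\operatorname{tr}(\mathsf H_f^3))f\rangle$, where $|\nabla\mathsf H_f|^2=\sum_{i,j,k}(\partial_k(\mathsf H_f)_{ij})^2$. *)

From Stdlib Require Import Reals.
From Coquelicot Require Import Coquelicot.
Open Scope R_scope.

Definition dot (k x : R * R) : R := fst k * fst x + snd k * snd x.

Definition k1 : R * R := (1, 0).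
Definition k2 : R * R := (- / 2, sqrt 3 / 2).
Definition k3 : R * R := (- / 2, - (sqrt 3 / 2)).

Definition in_Lambda (x : R * R) : Prop :=
  (exists m : Z, dot k1 x = 2 * PI * IZR m) /\
  (exists n : Z, dot k2 x = 2 * PI * IZR n).

(* A Z-basis of Lambda (dual to k1,k2: k_i . a_j = 2 pi delta_ij). *)
Definition a1 : R * R := (2 * PI, 2 * PI / sqrt 3).
Definition a2 : R * R := (0, 4 * PI / sqrt 3).

(* Normalized Haar average of a Lambda-periodic G: average over the
   fundamental cell { s a1 + t a2 | s,t in [0,1] }; in the coordinates
   (s,t) the normalized Lebesgue measure of the cell is ds dt. *)
Definition avg (G : R -> R -> R) : R :=
  RInt (fun s => RInt (fun t =>
      G (s * fst a1 + t * fst a2) (s * snd a1 + t * snd a2)) 0 1) 0 1.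

Definition pd (i : nat) (G : R -> R -> R) : R -> R -> R :=
  match i with
  | O => fun x y => Derive (fun t => G t y) x
  | _ => fun x y => Derive (fun t => G x t) y
  end.

Definition sum2 (F : nat -> R) : R := F 0%nat + F 1%nat.

Definition Hf (f : R -> R -> R) (i j : nat) : R -> R -> R :=
  fun x y => - pd i (pd j (fun a b => ln (f a b))) x y.

Definition trH (f : R -> R -> R) x y : R := sum2 (fun i => Hf f i i x y).
Definition trH2 (f : R -> R -> R) x y : R :=
  sum2 (fun i => sum2 (fun j => Hf f i j x y * Hf f j i x y)).
Definition trH3 (f : R -> R -> R) x y : R :=
  sum2 (fun i => sum2 (fun j => sum2 (fun k =>
     Hf f i j x y * Hf f j k x y * Hf f k i x y))).
Definition gradH2 (f : R -> R -> R) x y : R :=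
  sum2 (fun i => sum2 (fun j => sum2 (fun k =>
     (pd k (Hf f i j) x y) ^ 2))).

Definition Ifun (f : R -> R -> R) : R := avg (fun x y => trH f x y * f x y).
Definition Qfun (f : R -> R -> R) : R := avg (fun x y => trH2 f x y * f x y).
Definition Dfun (f : R -> R -> R) : R :=
  avg (fun x y => (gradH2 f x y + 2 * trH3 f x y) * f x y).

Definition phi (x y : R) : R :=
  cos (dot k1 (x, y)) + cos (dot k2 (x, y)) + cos (dot k3 (x, y)).

Definition Zeps (eps : R) : R := avg (fun x y => exp (eps * phi x y)).
Definition feps (eps : R) : R -> R -> R :=
  fun x y => exp (eps * phi x y) / Zeps eps.

Definition bigO0 (g : R -> R) (n : nat) : Prop :=
  exists C delta : R, 0 < delta /\
    forall eps, 0 < Rabs eps < delta -> Rabs (g eps) <= C * Rabs eps ^ n.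

From Stdlib Require Import Reals Lra Psatz List Factorial.
From Coquelicot Require Import Coquelicot.
Import ListNotations.
Open Scope R_scope.

(* In the lattice coordinates x = s a1 + t a2 one has k1.x = 2 pi s, k2.x = 2 pi t and
   k3.x = -2 pi (s + t), so the Haar average is the integral over the unit square.
   Since log f_eps = eps phi - log Z_eps, the matrix H_f = eps sum_j cos(k_j.x) k_j (x) k_j
   is a sum of rank-one terms, and tr H, tr H^2, tr H^3 and |grad H|^2 are powers of eps
   times trigonometric polynomials whose coefficients only involve the Gram matrix
   k_i.k_j (1 on the diagonal, -1/2 off it).  Each of I, Q, D is therefore a ratio
   <P e^(eps phi)> / <e^(eps phi)> for explicit such P.  Replacing e^(eps phi) by its
   Taylor polynomial costs O(eps^n) uniformly, and what remains are averages of
   trigonometric polynomials, i.e. combinations of the moments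
   int_0^1 cos^i sin^j (2 pi t) dt, which follow from periodicity and cos^2 + sin^2 = 1.
   The claims on I D - Q^2 and I D / Q^2 are then algebra with O-terms. *)

(** * Taylor polynomials of the exponential *)

Lemma abs_sub_le_of_derive_bound (f df : R -> R) K a b :
  (forall x, is_derive f x (df x)) ->
  (forall x, Rmin a b <= x <= Rmax a b -> Rabs (df x) <= K) ->
  Rabs (f b - f a) <= K * Rabs (b - a).
Proof.
  intros Hd Hb.
  destruct (MVT_gen f a b df) as [c [Hc ->]].
  - intros x _; apply Hd.
  - intros x _. apply continuity_pt_filterlim, (ex_derive_continuous f).
    eexists; apply Hd.
  - rewrite Rabs_mult. apply Rmult_le_compat_r; [apply Rabs_pos | now apply Hb].
Qed.

Lemma exp_le_of_abs_le u M : Rabs u <= M -> exp u <= exp M.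
Proof.
  intros Hu. apply Rabs_le_between in Hu.
  destruct (Rle_lt_or_eq_dec u M) as [h | ->]; [lra | | lra].
  now left; apply exp_increasing.
Qed.

Lemma exp_lipschitz_on u v M : Rabs u <= M -> Rabs v <= M ->
  Rabs (exp u - exp v) <= exp M * Rabs (u - v).
Proof.
  intros Hu Hv. apply abs_sub_le_of_derive_bound with (df := exp).
  - apply is_derive_exp.
  - intros x Hx. rewrite Rabs_pos_eq by (left; apply exp_pos).
    apply exp_le_of_abs_le. apply Rabs_le_between in Hu, Hv.
    apply Rabs_le. unfold Rmin, Rmax in Hx. destruct Rle_dec; lra.
Qed.

Fixpoint exp_poly (n : nat) (u : R) : R :=
  match n with
  | O => 0
  | S n => exp_poly n u + u ^ n / INR (fact n)
  end.

Lemma exp_poly_0 n : exp_poly (S n) 0 = 1.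
Proof.
  induction n as [|n IH]; [simpl; field |].
  change (exp_poly (S n) 0 + 0 ^ S n / INR (fact (S n)) = 1).
  rewrite IH, pow_i by lia. unfold Rdiv. ring.
Qed.

Lemma is_derive_exp_poly n x : is_derive (exp_poly (S n)) x (exp_poly n x).
Proof.
  induction n as [|n IH].
  - simpl. auto_derive; auto.
  - change (exp_poly (S (S n))) with (fun u => exp_poly (S n) u + u ^ S n / INR (fact (S n))).
    replace (exp_poly (S n) x) with (exp_poly n x + x ^ n / INR (fact n)) by reflexivity.
    apply (is_derive_plus (exp_poly (S n))); [exact IH |].
    auto_derive; [auto |].
    change (fact n + n * fact n)%nat with (fact (S n)).
    change (match n with O => 1 | S _ => INR n + 1 end) with (INR (S n)).
    rewrite fact_simpl, mult_INR.
    field. split; [apply INR_fact_neq_0 | apply not_0_INR; lia].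
Qed.

Lemma exp_taylor_remainder n u M : Rabs u <= M ->
  Rabs (exp u - exp_poly n u) <= exp M * Rabs u ^ n.
Proof.
  revert u. induction n as [|n IH]; intros u Hu.
  - simpl. rewrite Rminus_0_r, Rmult_1_r, Rabs_pos_eq by (left; apply exp_pos).
    now apply exp_le_of_abs_le.
  - replace (exp u - exp_poly (S n) u)
      with ((exp u - exp_poly (S n) u) - (exp 0 - exp_poly (S n) 0))
      by (rewrite exp_poly_0, exp_0; ring).
    replace (exp M * Rabs u ^ S n) with (exp M * Rabs u ^ n * Rabs (u - 0))
      by (rewrite Rminus_0_r; simpl; ring).
    apply (abs_sub_le_of_derive_bound (fun x => exp x - exp_poly (S n) x)
             (fun x => exp x - exp_poly n x)).
    + intros x. apply (is_derive_minus exp (exp_poly (S n))).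
      apply is_derive_exp. apply is_derive_exp_poly.
    + intros x Hx.
      assert (Hxu : Rabs x <= Rabs u).
      { unfold Rmin, Rmax in Hx. apply Rabs_le.
        destruct Rle_dec; [rewrite Rabs_pos_eq | rewrite Rabs_left]; lra. }
      eapply Rle_trans; [apply IH; lra |].
      apply Rmult_le_compat_l; [left; apply exp_pos |].
      apply pow_incr. split; [apply Rabs_pos | exact Hxu].
Qed.

(** * Big-O calculus at zero *)

Lemma bigO0_nonneg_const f n : bigO0 f n ->
  exists C d, 0 <= C /\ 0 < d /\
    forall e, 0 < Rabs e < d -> Rabs (f e) <= C * Rabs e ^ n.
Proof.
  intros [C [d [Hd H]]]. exists (Rabs C), d. split; [apply Rabs_pos | split; [exact Hd |]].
  intros e He. eapply Rle_trans; [now apply H |].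
  apply Rmult_le_compat_r; [apply pow_le, Rabs_pos | apply Rle_abs].
Qed.

Lemma bigO0_of_bound f n K : (forall e, Rabs e <= 1 -> Rabs (f e) <= K * Rabs e ^ n) ->
  bigO0 f n.
Proof. intros H. exists K, 1. split; [lra |]. intros e He. apply H. lra. Qed.

Lemma bigO0_ext_near f g n :
  (exists d, 0 < d /\ forall e, 0 < Rabs e < d -> f e = g e) -> bigO0 g n -> bigO0 f n.
Proof.
  intros [d [Hd Hfg]] [C [d' [Hd' H]]]. exists C, (Rmin d d').
  split; [now apply Rmin_glb_lt |]. intros e He.
  assert (Rmin d d' <= d) by apply Rmin_l. assert (Rmin d d' <= d') by apply Rmin_r.
  rewrite Hfg by lra. apply H. lra.
Qed.

Lemma bigO0_ext f g n : (forall e, e <> 0 -> f e = g e) -> bigO0 g n -> bigO0 f n.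
Proof.
  intros H. apply bigO0_ext_near. exists 1. split; [lra |]. intros e He.
  apply H. intros ->. rewrite Rabs_R0 in He. lra.
Qed.

Lemma bigO0_add f g n : bigO0 f n -> bigO0 g n -> bigO0 (fun e => f e + g e) n.
Proof.
  intros [C1 [d1 [Hd1 H1]]] [C2 [d2 [Hd2 H2]]]. exists (C1 + C2), (Rmin d1 d2).
  split; [now apply Rmin_glb_lt |]. intros e He.
  assert (Rmin d1 d2 <= d1) by apply Rmin_l. assert (Rmin d1 d2 <= d2) by apply Rmin_r.
  eapply Rle_trans; [apply Rabs_triang |].
  assert (Rabs (f e) <= C1 * Rabs e ^ n) by (apply H1; lra).
  assert (Rabs (g e) <= C2 * Rabs e ^ n) by (apply H2; lra).
  lra.
Qed.

Lemma bigO0_mul f g n m : bigO0 f n -> bigO0 g m -> bigO0 (fun e => f e * g e) (n + m).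
Proof.
  intros Hf Hg.
  destruct (bigO0_nonneg_const f n Hf) as [C1 [d1 [HC1 [Hd1 H1]]]].
  destruct (bigO0_nonneg_const g m Hg) as [C2 [d2 [HC2 [Hd2 H2]]]].
  exists (C1 * C2), (Rmin d1 d2). split; [now apply Rmin_glb_lt |]. intros e He.
  assert (Rmin d1 d2 <= d1) by apply Rmin_l. assert (Rmin d1 d2 <= d2) by apply Rmin_r.
  rewrite Rabs_mult, pow_add.
  replace (C1 * C2 * (Rabs e ^ n * Rabs e ^ m))
    with ((C1 * Rabs e ^ n) * (C2 * Rabs e ^ m)) by ring.
  apply Rmult_le_compat; [apply Rabs_pos | apply Rabs_pos | apply H1 | apply H2]; lra.
Qed.

Lemma bigO0_monomial c n : bigO0 (fun e => c * e ^ n) n.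
Proof.
  exists (Rabs c), 1. split; [lra |]. intros e _. rewrite Rabs_mult, RPow_abs. lra.
Qed.

Lemma bigO0_weaken f n m : (m <= n)%nat -> bigO0 f n -> bigO0 f m.
Proof.
  intros Hmn Hf. destruct (bigO0_nonneg_const f n Hf) as [C [d [HC [Hd H]]]].
  exists C, (Rmin d 1). split; [apply Rmin_glb_lt; lra |]. intros e He.
  assert (Rmin d 1 <= d) by apply Rmin_l. assert (Rmin d 1 <= 1) by apply Rmin_r.
  eapply Rle_trans; [apply H; lra |]. apply Rmult_le_compat_l; [exact HC |].
  replace n with (m + (n - m))%nat by lia. rewrite pow_add.
  assert (0 <= Rabs e ^ m) by apply pow_le, Rabs_pos.
  assert (Rabs e ^ (n - m) <= 1).
  { rewrite <- (pow1 (n - m)). apply pow_incr. split; [apply Rabs_pos | lra]. }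
  nra.
Qed.

Lemma bigO0_div_pow f n k : bigO0 f (n + k) -> bigO0 (fun e => f e / e ^ k) n.
Proof.
  intros [C [d [Hd H]]]. exists C, d. split; [exact Hd |]. intros e He.
  assert (Hk : 0 < Rabs e ^ k) by (apply pow_lt; lra).
  unfold Rdiv. rewrite Rabs_mult, Rabs_inv, <- RPow_abs.
  apply (Rmult_le_reg_r (Rabs e ^ k)); [exact Hk |].
  rewrite Rmult_assoc, Rinv_l by lra. rewrite Rmult_1_r, Rmult_assoc, <- pow_add.
  now apply H.
Qed.

Lemma bigO0_away_from_zero g c n : c <> 0 -> bigO0 (fun e => g e - c) (S n) ->
  exists d, 0 < d /\ forall e, 0 < Rabs e < d -> Rabs c / 2 <= Rabs (g e).
Proof.
  intros Hc Hg.
  assert (Hg1 : bigO0 (fun e => g e - c) 1) by (apply (bigO0_weaken _ (S n)); [lia | exact Hg]).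
  destruct (bigO0_nonneg_const _ _ Hg1) as [C [d [HC [Hd H]]]].
  assert (Hc' : 0 < Rabs c) by now apply Rabs_pos_lt.
  exists (Rmin d (Rabs c / (2 * (C + 1)))).
  split; [apply Rmin_glb_lt; [exact Hd | apply Rdiv_lt_0_compat; lra] |]. intros e He.
  assert (Rmin d (Rabs c / (2 * (C + 1))) <= d) by apply Rmin_l.
  assert (He' : Rabs e <= Rabs c / (2 * (C + 1)))
    by (eapply Rle_trans; [left; apply He | apply Rmin_r]).
  assert (Hge : Rabs (g e - c) <= C * Rabs e) by (rewrite <- (pow_1 (Rabs e)); apply H; lra).
  assert (C * Rabs e <= Rabs c / 2).
  { apply Rle_trans with ((C + 1) * Rabs e); [generalize (Rabs_pos e); nra |].
    apply (Rmult_le_compat_l (C + 1)) in He'; [| lra].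
    replace ((C + 1) * (Rabs c / (2 * (C + 1)))) with (Rabs c / 2) in He' by (field; lra).
    exact He'. }
  assert (Rabs c <= Rabs (g e) + Rabs (g e - c)).
  { replace c with (g e - (g e - c)) at 1 by ring.
    eapply Rle_trans; [apply Rabs_triang | rewrite Rabs_Ropp; lra]. }
  lra.
Qed.

Lemma bigO0_inv g c n : c <> 0 -> bigO0 (fun e => g e - c) (S n) -> bigO0 (fun e => / g e) 0.
Proof.
  intros Hc Hg. destruct (bigO0_away_from_zero g c n Hc Hg) as [d [Hd H]].
  assert (Hc' : 0 < Rabs c) by now apply Rabs_pos_lt.
  exists (2 / Rabs c), d. split; [exact Hd |]. intros e He. specialize (H e He).
  rewrite pow_O, Rmult_1_r, Rabs_inv.
  replace (2 / Rabs c) with (/ (Rabs c / 2)) by (field; lra).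
  apply Rinv_le_contravar; lra.
Qed.

Lemma eventually_neg_of_bigO0 g c n : c < 0 -> bigO0 (fun e => g e - c * e ^ n) (S n) ->
  exists delta, 0 < delta /\ forall e, 0 < e < delta -> g e < 0.
Proof.
  intros Hc Hg. destruct (bigO0_nonneg_const _ _ Hg) as [C [d [HC [Hd H]]]].
  exists (Rmin d (- c / (C + 1))).
  split; [apply Rmin_glb_lt; [exact Hd | apply Rdiv_lt_0_compat; lra] |]. intros e He.
  assert (Rmin d (- c / (C + 1)) <= d) by apply Rmin_l.
  assert (He' : e < - c / (C + 1)) by (eapply Rlt_le_trans; [apply He | apply Rmin_r]).
  assert (Hen : 0 < e ^ n) by (apply pow_lt; lra).
  specialize (H e). rewrite Rabs_pos_eq in H by lra.
  assert (Hb : Rabs (g e - c * e ^ n) <= C * e ^ S n) by (apply H; lra).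
  apply Rabs_le_between in Hb.
  assert (C * e < - c).
  { apply Rle_lt_trans with ((C + 1) * e); [nra |].
    apply (Rmult_lt_compat_l (C + 1)) in He'; [| lra].
    replace ((C + 1) * (- c / (C + 1))) with (- c) in He' by (field; lra). exact He'. }
  simpl in Hb. nra.
Qed.

Lemma bigO0_sub f g n : bigO0 f n -> bigO0 g n -> bigO0 (fun e => f e - g e) n.
Proof.
  intros Hf Hg. apply (bigO0_ext _ (fun e => f e + (-1 * e ^ 0) * g e)); [intros; simpl; ring |].
  apply bigO0_add; [exact Hf | exact (bigO0_mul _ _ 0 n (bigO0_monomial (-1) 0) Hg)].
Qed.

Lemma bigO0_affine c0 c1 : bigO0 (fun e => c0 + c1 * e) 0.
Proof.
  apply (bigO0_ext _ (fun e => c0 * e ^ 0 + c1 * e ^ 1)); [intros; simpl; ring |].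
  apply bigO0_add; [apply bigO0_monomial | apply (bigO0_weaken _ 1); [lia | apply bigO0_monomial]].
Qed.

Lemma bigO0_quadratic_cubic c2 c3 : bigO0 (fun e => c2 * e ^ 2 + c3 * e ^ 3) 2.
Proof.
  apply bigO0_add; [apply bigO0_monomial | apply (bigO0_weaken _ 3); [lia | apply bigO0_monomial]].
Qed.

Lemma bigO0_div_near_one N Z a n k m :
  bigO0 (fun e => N e - a e) n -> bigO0 a k -> bigO0 (fun e => Z e - 1) (S m) ->
  (n <= k + S m)%nat -> bigO0 (fun e => N e / Z e - a e) n.
Proof.
  intros HN Ha HZ Hn.
  destruct (bigO0_away_from_zero Z 1 m R1_neq_R0 HZ) as [d [Hd HZd]].
  apply bigO0_ext_near with (g := fun e => ((N e - a e) - a e * (Z e - 1)) * / Z e).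
  { exists d. split; [exact Hd |]. intros e He. specialize (HZd e He).
    rewrite Rabs_R1 in HZd. assert (Z e <> 0) by (intros H; rewrite H, Rabs_R0 in HZd; lra).
    field. assumption. }
  replace n with (n + 0)%nat by lia.
  apply bigO0_mul; [| exact (bigO0_inv Z 1 m R1_neq_R0 HZ)].
  apply bigO0_sub; [exact HN |].
  apply (bigO0_weaken _ (k + S m)); [exact Hn | now apply bigO0_mul].
Qed.

(** * Lipschitz-bounded integrands on the unit square *)

(* The integrability condition used throughout: it makes the iterated Riemann integral
   below exist and be linear. *)
Definition lip_bounded (h : R -> R -> R) : Prop :=
  (exists L, forall s t s' t', Rabs (h s t - h s' t') <= L * (Rabs (s - s') + Rabs (t - t'))) /\
  (exists B, forall s t, Rabs (h s t) <= B).

Lemma lip_bounded_const c : lip_bounded (fun _ _ => c).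
Proof.
  split; [exists 0 | exists (Rabs c)]; intros; [rewrite Rminus_diag, Rabs_R0 |]; lra.
Qed.

Lemma lip_bounded_plus f g : lip_bounded f -> lip_bounded g ->
  lip_bounded (fun s t => f s t + g s t).
Proof.
  intros [[Lf Hf] [Bf HBf]] [[Lg Hg] [Bg HBg]]. split.
  - exists (Lf + Lg). intros s t s' t'.
    specialize (Hf s t s' t'); specialize (Hg s t s' t').
    replace (f s t + g s t - (f s' t' + g s' t'))
      with ((f s t - f s' t') + (g s t - g s' t')) by ring.
    eapply Rle_trans; [apply Rabs_triang | lra].
  - exists (Bf + Bg). intros s t. specialize (HBf s t); specialize (HBg s t).
    eapply Rle_trans; [apply Rabs_triang | lra].
Qed.

Lemma lip_bounded_opp f : lip_bounded f -> lip_bounded (fun s t => - f s t).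
Proof.
  intros [[L Hf] [B HB]]. split; [exists L | exists B]; intros s t.
  - intros s' t'. replace (- f s t - - f s' t') with (- (f s t - f s' t')) by ring.
    rewrite Rabs_Ropp. apply Hf.
  - rewrite Rabs_Ropp. apply HB.
Qed.

Lemma lip_bounded_minus f g : lip_bounded f -> lip_bounded g ->
  lip_bounded (fun s t => f s t - g s t).
Proof. intros Hf Hg. exact (lip_bounded_plus _ _ Hf (lip_bounded_opp _ Hg)). Qed.

Lemma lip_bounded_mult f g : lip_bounded f -> lip_bounded g ->
  lip_bounded (fun s t => f s t * g s t).
Proof.
  intros [[Lf Hf] [Bf HBf]] [[Lg Hg] [Bg HBg]].
  assert (0 <= Bf) by (eapply Rle_trans; [apply Rabs_pos | apply (HBf 0 0)]).
  assert (0 <= Bg) by (eapply Rle_trans; [apply Rabs_pos | apply (HBg 0 0)]).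
  split.
  - exists (Bf * Lg + Bg * Lf). intros s t s' t'.
    set (D := Rabs (s - s') + Rabs (t - t')).
    replace (f s t * g s t - f s' t' * g s' t')
      with (f s t * (g s t - g s' t') + g s' t' * (f s t - f s' t')) by ring.
    eapply Rle_trans; [apply Rabs_triang | rewrite !Rabs_mult].
    assert (Rabs (f s t) * Rabs (g s t - g s' t') <= Bf * (Lg * D))
      by (apply Rmult_le_compat; auto using Rabs_pos).
    assert (Rabs (g s' t') * Rabs (f s t - f s' t') <= Bg * (Lf * D))
      by (apply Rmult_le_compat; auto using Rabs_pos).
    lra.
  - exists (Bf * Bg). intros s t. rewrite Rabs_mult.
    apply Rmult_le_compat; auto using Rabs_pos.
Qed.

Lemma lip_bounded_pow f n : lip_bounded f -> lip_bounded (fun s t => f s t ^ n).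
Proof.
  intros Hf. induction n as [|n IH]; [exact (lip_bounded_const 1) |].
  exact (lip_bounded_mult _ _ Hf IH).
Qed.

Lemma lip_bounded_exp f : lip_bounded f -> lip_bounded (fun s t => exp (f s t)).
Proof.
  intros [[L Hf] [B HB]]. split.
  - exists (exp B * L). intros s t s' t'. rewrite Rmult_assoc.
    eapply Rle_trans; [apply exp_lipschitz_on; apply HB |].
    apply Rmult_le_compat_l; [left; apply exp_pos | apply Hf].
  - exists (exp B). intros s t.
    rewrite Rabs_pos_eq by (left; apply exp_pos). now apply exp_le_of_abs_le.
Qed.

Lemma lip_bounded_exp_poly n f : lip_bounded f -> lip_bounded (fun s t => exp_poly n (f s t)).
Proof.
  intros Hf. induction n as [|n IH]; [exact (lip_bounded_const 0) |].
  apply lip_bounded_plus; [exact IH |].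
  apply lip_bounded_mult; [now apply lip_bounded_pow | apply lip_bounded_const].
Qed.

Section SeparateVariable.

Variables (g : R -> R) (L B : R).
Hypothesis g_lip : forall x y, Rabs (g x - g y) <= L * Rabs (x - y).
Hypothesis g_bounded : forall x, Rabs (g x) <= B.

Lemma lip_bounded_fst : lip_bounded (fun s _ => g s).
Proof.
  split; [exists (Rabs L) | exists B]; intros; [| apply g_bounded].
  eapply Rle_trans; [apply g_lip |].
  assert (L * Rabs (s - s') <= Rabs L * Rabs (s - s'))
    by (apply Rmult_le_compat_r; [apply Rabs_pos | apply Rle_abs]).
  assert (0 <= Rabs L * Rabs (t - t')) by (apply Rmult_le_pos; apply Rabs_pos).
  lra.
Qed.

Lemma lip_bounded_snd : lip_bounded (fun _ t => g t).
Proof.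
  split; [exists (Rabs L) | exists B]; intros; [| apply g_bounded].
  eapply Rle_trans; [apply g_lip |].
  assert (L * Rabs (t - t') <= Rabs L * Rabs (t - t'))
    by (apply Rmult_le_compat_r; [apply Rabs_pos | apply Rle_abs]).
  assert (0 <= Rabs L * Rabs (s - s')) by (apply Rmult_le_pos; apply Rabs_pos).
  lra.
Qed.

End SeparateVariable.

Lemma continuous_of_lipschitz_at (g : R -> R) L x :
  (forall y, Rabs (g y - g x) <= L * Rabs (y - x)) -> continuous g x.
Proof.
  intros H. apply continuity_pt_filterlim, continuity_pt_locally. intros eps.
  assert (HL := Rabs_pos L).
  assert (Hd : 0 < eps / (Rabs L + 1)) by (apply Rdiv_lt_0_compat; [apply cond_pos | lra]).
  exists (mkposreal _ Hd). intros u Hu. change (Rabs (u - x) < eps / (Rabs L + 1)) in Hu.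
  apply Rle_lt_trans with ((Rabs L + 1) * Rabs (u - x)).
  - eapply Rle_trans; [apply H |].
    generalize (Rabs_pos (u - x)) (Rle_abs L). nra.
  - apply Rmult_lt_reg_l with (/ (Rabs L + 1)); [apply Rinv_0_lt_compat; lra |].
    rewrite <- Rmult_assoc, Rinv_l, Rmult_1_l by lra.
    unfold Rdiv in Hu. lra.
Qed.

Definition sq_int (h : R -> R -> R) : R :=
  RInt (fun s => RInt (fun t => h s t) 0 1) 0 1.

Lemma ex_RInt_inner h s : lip_bounded h -> ex_RInt (fun t => h s t) 0 1.
Proof.
  intros [[L HL] _].
  apply (ex_RInt_continuous (V := R_CompleteNormedModule)). intros z _.
  apply (continuous_of_lipschitz_at _ L). intros y.
  eapply Rle_trans; [apply HL |]. rewrite Rminus_diag, Rabs_R0, Rplus_0_l. lra.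
Qed.

Lemma ex_RInt_outer h : lip_bounded h ->
  ex_RInt (fun s => RInt (fun t => h s t) 0 1) 0 1.
Proof.
  intros Hh. pose proof Hh as [[L HL] _].
  apply (ex_RInt_continuous (V := R_CompleteNormedModule)). intros z _.
  apply (continuous_of_lipschitz_at _ L). intros y.
  rewrite <- (RInt_minus (V := R_CompleteNormedModule)) by now apply ex_RInt_inner.
  replace (L * Rabs (y - z)) with ((1 - 0) * (L * Rabs (y - z))) by ring.
  apply abs_RInt_le_const; [lra | |].
  - apply (ex_RInt_minus (V := R_NormedModule)); now apply ex_RInt_inner.
  - intros t _. eapply Rle_trans; [apply HL |].
    rewrite Rminus_diag, Rabs_R0, Rplus_0_r. lra.
Qed.

Lemma sq_int_plus h g : lip_bounded h -> lip_bounded g ->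
  sq_int (fun s t => h s t + g s t) = sq_int h + sq_int g.
Proof.
  intros Hh Hg. unfold sq_int.
  rewrite <- (RInt_plus (V := R_CompleteNormedModule)) by now apply ex_RInt_outer.
  apply RInt_ext. intros s _.
  apply (RInt_plus (V := R_CompleteNormedModule)); now apply ex_RInt_inner.
Qed.

Lemma sq_int_minus h g : lip_bounded h -> lip_bounded g ->
  sq_int (fun s t => h s t - g s t) = sq_int h - sq_int g.
Proof.
  intros Hh Hg. unfold sq_int.
  rewrite <- (RInt_minus (V := R_CompleteNormedModule)) by now apply ex_RInt_outer.
  apply RInt_ext. intros s _.
  apply (RInt_minus (V := R_CompleteNormedModule)); now apply ex_RInt_inner.
Qed.

Lemma sq_int_scal h c : lip_bounded h -> sq_int (fun s t => c * h s t) = c * sq_int h.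
Proof.
  intros Hh. unfold sq_int.
  rewrite <- (RInt_scal (V := R_CompleteNormedModule)) by now apply ex_RInt_outer.
  apply RInt_ext. intros s _.
  apply (RInt_scal (V := R_CompleteNormedModule)); now apply ex_RInt_inner.
Qed.

Lemma sq_int_abs_le h B : lip_bounded h -> (forall s t, Rabs (h s t) <= B) ->
  Rabs (sq_int h) <= B.
Proof.
  intros Hh HB. unfold sq_int. replace B with ((1 - 0) * ((1 - 0) * B)) by ring.
  apply abs_RInt_le_const; [lra | now apply ex_RInt_outer |]. intros s _.
  apply abs_RInt_le_const; [lra | now apply ex_RInt_inner |]. intros t _.
  apply HB.
Qed.

Lemma sq_int_ge h c : lip_bounded h -> (forall s t, c <= h s t) -> c <= sq_int h.
Proof.
  intros Hh Hc. unfold sq_int.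
  replace c with (RInt (fun _ => RInt (fun _ => c) 0 1) 0 1)
    by (rewrite !RInt_const; unfold scal; simpl; unfold mult; simpl; ring).
  apply RInt_le; [lra | apply ex_RInt_const | now apply ex_RInt_outer |]. intros s _.
  apply RInt_le; [lra | apply ex_RInt_const | now apply ex_RInt_inner |]. intros t _.
  apply Hc.
Qed.

Lemma sq_int_ext f g : (forall s t, f s t = g s t) -> sq_int f = sq_int g.
Proof.
  intros H. unfold sq_int. apply RInt_ext. intros. apply RInt_ext. intros. apply H.
Qed.

Lemma sq_int_separated (f g : R -> R) : ex_RInt f 0 1 -> ex_RInt g 0 1 ->
  sq_int (fun s t => f s * g t) = RInt f 0 1 * RInt g 0 1.
Proof.
  intros Hf Hg. unfold sq_int.
  rewrite (RInt_ext _ (fun s => scal (RInt g 0 1) (f s))).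
  - rewrite (RInt_scal (V := R_CompleteNormedModule)) by exact Hf.
    unfold scal; simpl; unfold mult; simpl; ring.
  - intros s _. transitivity (scal (f s) (RInt g 0 1)).
    + exact (RInt_scal (V := R_CompleteNormedModule) g 0 1 (f s) Hg).
    + unfold scal; simpl; unfold mult; simpl; ring.
Qed.

Lemma sq_int_exp_taylor g P Bg BP n e :
  lip_bounded g -> lip_bounded P ->
  (forall s t, Rabs (g s t) <= Bg) -> (forall s t, Rabs (P s t) <= BP) -> Rabs e <= 1 ->
  Rabs (sq_int (fun s t => g s t * exp (e * P s t))
        - sq_int (fun s t => g s t * exp_poly n (e * P s t)))
  <= Bg * exp BP * BP ^ n * Rabs e ^ n.
Proof.
  intros Hg HP HBg HBP He.
  assert (HeP : lip_bounded (fun s t => e * P s t))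
    by exact (lip_bounded_mult _ _ (lip_bounded_const e) HP).
  rewrite <- sq_int_minus
    by (apply lip_bounded_mult; auto using lip_bounded_exp, lip_bounded_exp_poly).
  apply sq_int_abs_le.
  { apply lip_bounded_minus;
      apply lip_bounded_mult; auto using lip_bounded_exp, lip_bounded_exp_poly. }
  intros s t.
  assert (Hu : Rabs (e * P s t) <= BP).
  { rewrite Rabs_mult. specialize (HBP s t).
    generalize (Rabs_pos e) (Rabs_pos (P s t)). nra. }
  assert (Hun : Rabs (e * P s t) ^ n <= BP ^ n * Rabs e ^ n).
  { rewrite Rabs_mult, Rpow_mult_distr, Rmult_comm.
    apply Rmult_le_compat_r; [apply pow_le, Rabs_pos |].
    apply pow_incr. split; [apply Rabs_pos | apply HBP]. }
  replace (g s t * exp (e * P s t) - g s t * exp_poly n (e * P s t))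
    with (g s t * (exp (e * P s t) - exp_poly n (e * P s t))) by ring.
  rewrite Rabs_mult, !Rmult_assoc.
  apply Rmult_le_compat; [apply Rabs_pos | apply Rabs_pos | apply HBg |].
  eapply Rle_trans; [exact (exp_taylor_remainder n _ BP Hu) |].
  apply Rmult_le_compat_l; [left; apply exp_pos | exact Hun].
Qed.

(** * Trigonometric polynomials in the lattice coordinates *)

Definition cs (s : R) : R := cos (2 * PI * s).
Definition sn (s : R) : R := sin (2 * PI * s).

Lemma cs_lipschitz x y : Rabs (cs x - cs y) <= 2 * PI * Rabs (x - y).
Proof.
  apply (abs_sub_le_of_derive_bound cs (fun u => - (2 * PI * sin (2 * PI * u)))).
  - intros u. unfold cs. auto_derive; [auto | ring].
  - intros u _. rewrite Rabs_Ropp, Rabs_mult, Rabs_pos_eq by (generalize PI_RGT_0; lra).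
    assert (Rabs (sin (2 * PI * u)) <= 1) by (apply Rabs_le, SIN_bound).
    generalize PI_RGT_0 (Rabs_pos (sin (2 * PI * u))). nra.
Qed.

Lemma sn_lipschitz x y : Rabs (sn x - sn y) <= 2 * PI * Rabs (x - y).
Proof.
  apply (abs_sub_le_of_derive_bound sn (fun u => 2 * PI * cos (2 * PI * u))).
  - intros u. unfold sn. auto_derive; [auto | ring].
  - intros u _. rewrite Rabs_mult, Rabs_pos_eq by (generalize PI_RGT_0; lra).
    assert (Rabs (cos (2 * PI * u)) <= 1) by (apply Rabs_le, COS_bound).
    generalize PI_RGT_0 (Rabs_pos (cos (2 * PI * u))). nra.
Qed.

Lemma abs_cs_le s : Rabs (cs s) <= 1.
Proof. apply Rabs_le, COS_bound. Qed.

Lemma abs_sn_le s : Rabs (sn s) <= 1.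
Proof. apply Rabs_le, SIN_bound. Qed.

Lemma cs_1 : cs 1 = cs 0.
Proof. unfold cs. now rewrite Rmult_1_r, Rmult_0_r, cos_2PI, cos_0. Qed.

Lemma sn_1 : sn 1 = sn 0.
Proof. unfold sn. now rewrite Rmult_1_r, Rmult_0_r, sin_2PI, sin_0. Qed.

Inductive mon := Mo (c : R) (i j k l : nat).

Definition tpoly := list mon.

Definition mon_eval (m : mon) (s t : R) : R :=
  let 'Mo c i j k l := m in c * (cs s ^ i * sn s ^ j) * (cs t ^ k * sn t ^ l).

Fixpoint tp_eval (p : tpoly) (s t : R) : R :=
  match p with
  | [] => 0
  | m :: p => mon_eval m s t + tp_eval p s t
  end.

Definition tp_one : tpoly := [Mo 1 0 0 0 0].

Definition tp_scale (a : R) (p : tpoly) : tpoly :=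
  map (fun '(Mo c i j k l) => Mo (a * c) i j k l) p.

Definition mon_mul (m m' : mon) : mon :=
  let 'Mo c i j k l := m in
  let 'Mo c' i' j' k' l' := m' in
  Mo (c * c') (i + i') (j + j') (k + k') (l + l').

Definition tp_mul (p q : tpoly) : tpoly := flat_map (fun m => map (mon_mul m) q) p.

Fixpoint tp_pow (p : tpoly) (n : nat) : tpoly :=
  match n with
  | O => tp_one
  | S n => tp_mul p (tp_pow p n)
  end.

Fixpoint tp_exp_poly (n : nat) (p : tpoly) : tpoly :=
  match n with
  | O => []
  | S n => tp_exp_poly n p ++ tp_scale (/ INR (fact n)) (tp_pow p n)
  end.

Lemma tp_eval_app p q s t : tp_eval (p ++ q) s t = tp_eval p s t + tp_eval q s t.
Proof. induction p as [|m p IH]; simpl; [ring | rewrite IH; ring]. Qed.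

Lemma tp_eval_one s t : tp_eval tp_one s t = 1.
Proof. simpl. ring. Qed.

Lemma tp_eval_scale a p s t : tp_eval (tp_scale a p) s t = a * tp_eval p s t.
Proof. induction p as [|[c i j k l] p IH]; simpl in *; [ring | rewrite IH; ring]. Qed.

Lemma mon_eval_mul m m' s t : mon_eval (mon_mul m m') s t = mon_eval m s t * mon_eval m' s t.
Proof. destruct m, m'. simpl. rewrite !pow_add. ring. Qed.

Lemma tp_eval_map_mon_mul m q s t :
  tp_eval (map (mon_mul m) q) s t = mon_eval m s t * tp_eval q s t.
Proof.
  induction q as [|m' q IH]; cbn [map tp_eval]; [ring |].
  rewrite IH, mon_eval_mul. ring.
Qed.

Lemma tp_eval_mul p q s t : tp_eval (tp_mul p q) s t = tp_eval p s t * tp_eval q s t.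
Proof.
  induction p as [|m p IH]; [simpl; ring |].
  change (tp_mul (m :: p) q) with (map (mon_mul m) q ++ tp_mul p q).
  rewrite tp_eval_app, IH, tp_eval_map_mon_mul. simpl. ring.
Qed.

Lemma tp_eval_pow p n s t : tp_eval (tp_pow p n) s t = tp_eval p s t ^ n.
Proof.
  induction n as [|n IH]; simpl; [ring | rewrite tp_eval_mul, IH; ring].
Qed.

Lemma tp_eval_exp_poly n p s t :
  tp_eval (tp_exp_poly n p) s t = exp_poly n (tp_eval p s t).
Proof.
  induction n as [|n IH]; simpl; [reflexivity |].
  rewrite tp_eval_app, tp_eval_scale, tp_eval_pow, IH. unfold Rdiv. ring.
Qed.

Fixpoint tp_abs (p : tpoly) : R :=
  match p with
  | [] => 0
  | Mo c _ _ _ _ :: p => Rabs c + tp_abs p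
  end.

Lemma tp_eval_abs_le p s t : Rabs (tp_eval p s t) <= tp_abs p.
Proof.
  assert (Hle1 : forall a b, Rabs a <= 1 -> Rabs b <= 1 -> Rabs (a * b) <= 1).
  { intros a b Ha Hb. rewrite Rabs_mult.
    generalize (Rabs_pos a) (Rabs_pos b). nra. }
  assert (Hpow : forall a n, Rabs a <= 1 -> Rabs (a ^ n) <= 1).
  { intros a n Ha. induction n as [|n IH]; simpl; [rewrite Rabs_R1; lra | auto]. }
  induction p as [|[c i j k l] p IH]; simpl; [rewrite Rabs_R0; lra |].
  eapply Rle_trans; [apply Rabs_triang |].
  assert (Hm : Rabs ((cs s ^ i * sn s ^ j) * (cs t ^ k * sn t ^ l)) <= 1)
    by auto using abs_cs_le, abs_sn_le.
  rewrite Rmult_assoc, Rabs_mult.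
  generalize (Rabs_pos c) (Rabs_pos (cs s ^ i * sn s ^ j * (cs t ^ k * sn t ^ l))). nra.
Qed.

Lemma lip_bounded_cs_sn_snd i j : lip_bounded (fun _ t => cs t ^ i * sn t ^ j).
Proof.
  apply lip_bounded_mult; apply lip_bounded_pow.
  - exact (lip_bounded_snd cs (2 * PI) 1 cs_lipschitz abs_cs_le).
  - exact (lip_bounded_snd sn (2 * PI) 1 sn_lipschitz abs_sn_le).
Qed.

Lemma lip_bounded_cs_sn_fst i j : lip_bounded (fun s _ => cs s ^ i * sn s ^ j).
Proof.
  apply lip_bounded_mult; apply lip_bounded_pow.
  - exact (lip_bounded_fst cs (2 * PI) 1 cs_lipschitz abs_cs_le).
  - exact (lip_bounded_fst sn (2 * PI) 1 sn_lipschitz abs_sn_le).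
Qed.

Lemma lip_bounded_mon_eval m : lip_bounded (mon_eval m).
Proof.
  destruct m as [c i j k l].
  apply lip_bounded_mult; [apply lip_bounded_mult; [apply lip_bounded_const |] |].
  - apply lip_bounded_cs_sn_fst.
  - apply lip_bounded_cs_sn_snd.
Qed.

Lemma lip_bounded_tp_eval p : lip_bounded (tp_eval p).
Proof.
  induction p as [|m p IH]; [apply lip_bounded_const |].
  exact (lip_bounded_plus _ _ (lip_bounded_mon_eval m) IH).
Qed.

Definition moment (i j : nat) : R := RInt (fun t => cs t ^ i * sn t ^ j) 0 1.

Fixpoint tp_int (p : tpoly) : R :=
  match p with
  | [] => 0
  | Mo c i j k l :: p => c * (moment i j * moment k l) + tp_int p
  end.

Lemma ex_RInt_moment i j : ex_RInt (fun t => cs t ^ i * sn t ^ j) 0 1.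
Proof. exact (ex_RInt_inner _ 0 (lip_bounded_cs_sn_snd i j)). Qed.

Lemma sq_int_mon_eval c i j k l :
  sq_int (mon_eval (Mo c i j k l)) = c * (moment i j * moment k l).
Proof.
  unfold moment. rewrite <- sq_int_separated by apply ex_RInt_moment.
  rewrite <- sq_int_scal
    by exact (lip_bounded_mult _ _ (lip_bounded_cs_sn_fst i j) (lip_bounded_cs_sn_snd k l)).
  apply sq_int_ext. intros s t. simpl. ring.
Qed.

Lemma sq_int_tp_eval p : sq_int (tp_eval p) = tp_int p.
Proof.
  induction p as [|[c i j k l] p IH].
  - unfold sq_int. simpl. rewrite !RInt_const. unfold scal; simpl; unfold mult; simpl. ring.
  - change (tp_int (Mo c i j k l :: p)) with (c * (moment i j * moment k l) + tp_int p).
    rewrite <- IH, <- sq_int_mon_eval.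
    exact (sq_int_plus _ _ (lip_bounded_mon_eval _) (lip_bounded_tp_eval p)).
Qed.

Lemma RInt_periodic_derivative (F f : R -> R) :
  (forall x, is_derive F x (f x)) -> (forall x, continuous f x) -> F 1 = F 0 ->
  RInt f 0 1 = 0.
Proof.
  intros HF Hf Hper.
  assert (H : is_RInt f 0 1 (minus (F 1) (F 0)))
    by (apply (is_RInt_derive (V := R_CompleteNormedModule)); auto).
  rewrite (is_RInt_unique _ _ _ _ H), Hper. apply (minus_eq_zero (G := R_AbelianGroup)).
Qed.

Lemma moment_l_1 a : moment a 1 = 0.
Proof.
  apply (RInt_periodic_derivative (fun t => - cs t ^ S a / (2 * PI * INR (S a)))).
  - intros x. unfold cs, sn. auto_derive; [exact I |].
    change (match a with O => 1 | S _ => INR a + 1 end) with (INR (S a)).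
    field. split; [apply not_0_INR; lia | apply PI_neq0].
  - intros x. apply (ex_derive_continuous (V := R_NormedModule)).
    unfold cs, sn. auto_derive. auto.
  - now rewrite cs_1.
Qed.

Lemma moment_1_r b : moment 1 b = 0.
Proof.
  apply (RInt_periodic_derivative (fun t => sn t ^ S b / (2 * PI * INR (S b)))).
  - intros x. unfold cs, sn. auto_derive; [exact I |].
    change (match b with O => 1 | S _ => INR b + 1 end) with (INR (S b)).
    field. split; [apply not_0_INR; lia | apply PI_neq0].
  - intros x. apply (ex_derive_continuous (V := R_NormedModule)).
    unfold cs, sn. auto_derive. auto.
  - now rewrite sn_1.
Qed.

Lemma moment_0_0 : moment 0 0 = 1.
Proof.
  unfold moment. rewrite (RInt_ext _ (fun _ => 1)) by (intros; simpl; ring).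
  rewrite RInt_const. unfold scal; simpl; unfold mult; simpl. ring.
Qed.

Lemma moment_pythagoras a b : moment (S (S a)) b + moment a (S (S b)) = moment a b.
Proof.
  unfold moment. rewrite <- (RInt_plus (V := R_CompleteNormedModule)) by apply ex_RInt_moment.
  apply RInt_ext. intros t _. unfold plus; simpl.
  assert (H := sin2_cos2 (2 * PI * t)). unfold Rsqr in H. unfold cs, sn.
  transitivity (cos (2 * PI * t) ^ a * sin (2 * PI * t) ^ b
                * (sin (2 * PI * t) * sin (2 * PI * t) + cos (2 * PI * t) * cos (2 * PI * t)));
    [ring | rewrite H; ring].
Qed.

Lemma moment_2_0_eq_0_2 : moment 2 0 = moment 0 2.
Proof.
  apply Rminus_diag_uniq. unfold moment.
  rewrite <- (RInt_minus (V := R_CompleteNormedModule)) by apply ex_RInt_moment.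
  apply (RInt_periodic_derivative (fun t => cs t * sn t / (2 * PI))).
  - intros x. unfold cs, sn, minus, plus, opp; simpl. auto_derive; [exact I |].
    field. apply PI_neq0.
  - intros x. apply (ex_derive_continuous (V := R_NormedModule)).
    unfold cs, sn, minus, plus, opp; simpl. auto_derive. exact I.
  - now rewrite cs_1, sn_1.
Qed.

Lemma moment_2_0 : moment 2 0 = / 2.
Proof.
  assert (H := moment_pythagoras 0 0). rewrite moment_0_0, <- moment_2_0_eq_0_2 in H. lra.
Qed.

Lemma moment_0_2 : moment 0 2 = / 2.
Proof. rewrite <- moment_2_0_eq_0_2. exact moment_2_0. Qed.

Lemma moment_3_0 : moment 3 0 = 0.
Proof.
  assert (H := moment_pythagoras 1 0). rewrite !moment_1_r in H. lra.
Qed.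

Lemma moment_0_3 : moment 0 3 = 0.
Proof.
  assert (H := moment_pythagoras 0 1). rewrite !moment_l_1 in H. lra.
Qed.

Lemma tp_exp_expansion p q n :
  bigO0 (fun e => sq_int (fun s t => tp_eval p s t * exp (e * tp_eval q s t))
                  - tp_int (tp_mul p (tp_exp_poly n (tp_scale e q)))) n.
Proof.
  apply (bigO0_of_bound _ _ (tp_abs p * exp (tp_abs q) * tp_abs q ^ n)). intros e He.
  rewrite <- sq_int_tp_eval.
  rewrite (sq_int_ext (tp_eval (tp_mul p (tp_exp_poly n (tp_scale e q))))
             (fun s t => tp_eval p s t * exp_poly n (e * tp_eval q s t)))
    by (intros; now rewrite tp_eval_mul, tp_eval_exp_poly, tp_eval_scale).
  apply sq_int_exp_taylor; auto using lip_bounded_tp_eval, tp_eval_abs_le.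
Qed.

(** * Plane waves, lattice coordinates and the Hessian of log f_eps *)

Inductive wave := W1 | W2 | W3.

Definition kw (w : wave) : R * R :=
  match w with W1 => k1 | W2 => k2 | W3 => k3 end.

Definition sumw (F : wave -> R) : R := F W1 + F W2 + F W3.

Definition gram (w u : wave) : R :=
  match w, u with
  | W1, W1 | W2, W2 | W3, W3 => 1
  | _, _ => - / 2
  end.

Lemma dot_kw w u : dot (kw w) (kw u) = gram w u.
Proof.
  assert (H3 : sqrt 3 * sqrt 3 = 3) by (apply sqrt_sqrt; lra).
  destruct w, u; unfold kw, gram, dot, k1, k2, k3; simpl; nra.
Qed.

Definition coord (i : nat) (k : R * R) : R := match i with O => fst k | _ => snd k end.

Lemma pd_ext i (F G : R -> R -> R) x y :
  (forall a b, F a b = G a b) -> pd i F x y = pd i G x y.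
Proof. intros H. destruct i; simpl; apply Derive_ext; intros; apply H. Qed.

Lemma pd_sumw_cos i (a : wave -> R) c x y :
  pd i (fun x y => sumw (fun w => a w * cos (dot (kw w) (x, y))) + c) x y
  = - sumw (fun w => a w * coord i (kw w) * sin (dot (kw w) (x, y))).
Proof.
  unfold sumw, dot.
  destruct i; simpl; apply is_derive_unique; auto_derive; auto; ring.
Qed.

Lemma pd_sumw_sin i (a : wave -> R) x y :
  pd i (fun x y => sumw (fun w => a w * sin (dot (kw w) (x, y)))) x y
  = sumw (fun w => a w * coord i (kw w) * cos (dot (kw w) (x, y))).
Proof.
  unfold sumw, dot.
  destruct i; simpl; apply is_derive_unique; auto_derive; auto; ring.
Qed.

Section RankOneSums.

Variables (v : wave -> R * R) (a : wave -> R).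

Lemma trace_rank_one_sum (H : nat -> nat -> R) :
  (forall i j, H i j = sumw (fun w => a w * coord i (v w) * coord j (v w))) ->
  sum2 (fun i => H i i) = sumw (fun w => a w * dot (v w) (v w)).
Proof. intros HH. unfold sum2. rewrite !HH. unfold sumw, coord, dot. ring. Qed.

Lemma trace_sq_rank_one_sum (H : nat -> nat -> R) :
  (forall i j, H i j = sumw (fun w => a w * coord i (v w) * coord j (v w))) ->
  sum2 (fun i => sum2 (fun j => H i j * H j i))
  = sumw (fun w => sumw (fun u => a w * a u * dot (v w) (v u) ^ 2)).
Proof. intros HH. unfold sum2. rewrite !HH. unfold sumw, coord, dot. ring. Qed.

Lemma trace_cube_rank_one_sum (H : nat -> nat -> R) :
  (forall i j, H i j = sumw (fun w => a w * coord i (v w) * coord j (v w))) ->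
  sum2 (fun i => sum2 (fun j => sum2 (fun k => H i j * H j k * H k i)))
  = sumw (fun w => sumw (fun u => sumw (fun z =>
      a w * a u * a z * (dot (v w) (v u) * dot (v u) (v z) * dot (v z) (v w))))).
Proof. intros HH. unfold sum2. rewrite !HH. unfold sumw, coord, dot. ring. Qed.

Lemma norm_sq_rank_one_sum3 (T : nat -> nat -> nat -> R) :
  (forall i j k, T i j k = sumw (fun w => a w * coord i (v w) * coord j (v w) * coord k (v w))) ->
  sum2 (fun i => sum2 (fun j => sum2 (fun k => T i j k ^ 2)))
  = sumw (fun w => sumw (fun u => a w * a u * dot (v w) (v u) ^ 3)).
Proof. intros HT. unfold sum2. rewrite !HT. unfold sumw, coord, dot. ring. Qed.

End RankOneSums.

Definition lat_x (s t : R) : R := s * fst a1 + t * fst a2.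
Definition lat_y (s t : R) : R := s * snd a1 + t * snd a2.

Lemma avg_lat G : avg G = sq_int (fun s t => G (lat_x s t) (lat_y s t)).
Proof. reflexivity. Qed.

Definition tp_cos (w : wave) : tpoly :=
  match w with
  | W1 => [Mo 1 1 0 0 0]
  | W2 => [Mo 1 0 0 1 0]
  | W3 => [Mo 1 1 0 1 0; Mo (-1) 0 1 0 1]
  end.

Definition tp_sin (w : wave) : tpoly :=
  match w with
  | W1 => [Mo 1 0 1 0 0]
  | W2 => [Mo 1 0 0 0 1]
  | W3 => [Mo (-1) 0 1 1 0; Mo (-1) 1 0 0 1]
  end.

Lemma dot_kw_lat w s t : dot (kw w) (lat_x s t, lat_y s t)
  = match w with W1 => 2 * PI * s | W2 => 2 * PI * t | W3 => - (2 * PI * s + 2 * PI * t) end.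
Proof.
  assert (sqrt 3 <> 0) by (apply Rgt_not_eq, sqrt_lt_R0; lra).
  destruct w; unfold dot, kw, k1, k2, k3, lat_x, lat_y, a1, a2; simpl; field; auto.
Qed.

Lemma cos_kw_lat w s t : cos (dot (kw w) (lat_x s t, lat_y s t)) = tp_eval (tp_cos w) s t.
Proof.
  rewrite dot_kw_lat. destruct w; simpl; unfold cs, sn;
    rewrite ?cos_neg, ?cos_plus; ring.
Qed.

Lemma sin_kw_lat w s t : sin (dot (kw w) (lat_x s t, lat_y s t)) = tp_eval (tp_sin w) s t.
Proof.
  rewrite dot_kw_lat. destruct w; simpl; unfold cs, sn;
    rewrite ?sin_neg, ?sin_plus; ring.
Qed.

Definition tp_sumw (F : wave -> tpoly) : tpoly := F W1 ++ F W2 ++ F W3.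

Lemma tp_eval_sumw F s t : tp_eval (tp_sumw F) s t = sumw (fun w => tp_eval (F w) s t).
Proof. unfold tp_sumw, sumw. rewrite !tp_eval_app. ring. Qed.

Definition tp_phi : tpoly := tp_sumw tp_cos.

Lemma phi_lat s t : phi (lat_x s t) (lat_y s t) = tp_eval tp_phi s t.
Proof.
  unfold tp_phi. rewrite tp_eval_sumw. unfold sumw. rewrite <- !cos_kw_lat. reflexivity.
Qed.

Definition exp_avg (p : tpoly) (e : R) : R :=
  sq_int (fun s t => tp_eval p s t * exp (e * tp_eval tp_phi s t)).

Lemma lip_bounded_exp_avg_integrand p e :
  lip_bounded (fun s t => tp_eval p s t * exp (e * tp_eval tp_phi s t)).
Proof.
  apply lip_bounded_mult; [apply lip_bounded_tp_eval |].
  apply lip_bounded_exp, lip_bounded_mult; [apply lip_bounded_const | apply lip_bounded_tp_eval].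
Qed.

Lemma Zeps_exp_avg e : Zeps e = exp_avg tp_one e.
Proof.
  unfold Zeps, exp_avg. rewrite avg_lat. apply sq_int_ext. intros s t.
  rewrite phi_lat, tp_eval_one. ring.
Qed.

Lemma exp_avg_one_pos e : 0 < exp_avg tp_one e.
Proof.
  apply Rlt_le_trans with (exp (- (Rabs e * tp_abs tp_phi))); [apply exp_pos |].
  apply sq_int_ge; [apply lip_bounded_exp_avg_integrand |]. intros s t.
  rewrite tp_eval_one, Rmult_1_l.
  assert (Habs : Rabs (e * tp_eval tp_phi s t) <= Rabs e * tp_abs tp_phi)
    by (rewrite Rabs_mult; apply Rmult_le_compat_l; [apply Rabs_pos | apply tp_eval_abs_le]).
  assert (Hle : - (Rabs e * tp_abs tp_phi) <= e * tp_eval tp_phi s t)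
    by (apply Rabs_le_between in Habs; lra).
  destruct (Rle_lt_or_eq_dec _ _ Hle) as [Hlt | ->]; [left; now apply exp_increasing | lra].
Qed.

Lemma ln_feps e x y :
  ln (feps e x y) = sumw (fun w => e * cos (dot (kw w) (x, y))) + - ln (Zeps e).
Proof.
  assert (HZ : 0 < Zeps e) by (rewrite Zeps_exp_avg; apply exp_avg_one_pos).
  unfold feps. rewrite ln_div, ln_exp by (auto; apply exp_pos).
  unfold phi, sumw. simpl. ring.
Qed.

Lemma Hf_feps e i j x y :
  Hf (feps e) i j x y
  = sumw (fun w => e * cos (dot (kw w) (x, y)) * coord i (kw w) * coord j (kw w)).
Proof.
  unfold Hf.
  rewrite (pd_ext i _ (fun a b =>
             sumw (fun w => - (e * coord j (kw w)) * sin (dot (kw w) (a, b))))).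
  - rewrite pd_sumw_sin. unfold sumw. ring.
  - intros a b. rewrite (pd_ext j _ _ a b (ln_feps e)), pd_sumw_cos. unfold sumw. ring.
Qed.

Lemma pd_Hf_feps e i j k x y :
  pd k (Hf (feps e) i j) x y
  = sumw (fun w =>
      - e * sin (dot (kw w) (x, y)) * coord i (kw w) * coord j (kw w) * coord k (kw w)).
Proof.
  rewrite (pd_ext k _ (fun a b => sumw (fun w =>
              (e * coord i (kw w) * coord j (kw w)) * cos (dot (kw w) (a, b))) + 0)).
  - rewrite pd_sumw_cos. unfold sumw. ring.
  - intros a b. rewrite Hf_feps. unfold sumw. ring.
Qed.

Definition tp_tr2 : tpoly :=
  tp_sumw (fun w => tp_sumw (fun u =>
    tp_scale (gram w u ^ 2) (tp_mul (tp_cos w) (tp_cos u)))).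

Definition tp_tr3 : tpoly :=
  tp_sumw (fun w => tp_sumw (fun u => tp_sumw (fun z =>
    tp_scale (gram w u * gram u z * gram z w) (tp_mul (tp_cos w) (tp_mul (tp_cos u) (tp_cos z)))))).

Definition tp_grad2 : tpoly :=
  tp_sumw (fun w => tp_sumw (fun u =>
    tp_scale (gram w u ^ 3) (tp_mul (tp_sin w) (tp_sin u)))).

Ltac expand_lat :=
  unfold tp_phi, tp_tr2, tp_tr3, tp_grad2, tp_sumw, sumw; cbv beta;
  rewrite ?tp_eval_app, ?tp_eval_scale, ?tp_eval_mul, ?cos_kw_lat, ?sin_kw_lat, ?dot_kw;
  cbn [gram]; ring.

Lemma trH_lat e s t : trH (feps e) (lat_x s t) (lat_y s t) = e * tp_eval tp_phi s t.
Proof.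
  unfold trH.
  rewrite (trace_rank_one_sum kw (fun w => e * cos (dot (kw w) (lat_x s t, lat_y s t)))
             (fun i j => Hf (feps e) i j (lat_x s t) (lat_y s t)))
    by (intros; apply Hf_feps).
  expand_lat.
Qed.

Lemma trH2_lat e s t : trH2 (feps e) (lat_x s t) (lat_y s t) = e ^ 2 * tp_eval tp_tr2 s t.
Proof.
  unfold trH2.
  rewrite (trace_sq_rank_one_sum kw (fun w => e * cos (dot (kw w) (lat_x s t, lat_y s t)))
             (fun i j => Hf (feps e) i j (lat_x s t) (lat_y s t)))
    by (intros; apply Hf_feps).
  expand_lat.
Qed.

Lemma trH3_lat e s t : trH3 (feps e) (lat_x s t) (lat_y s t) = e ^ 3 * tp_eval tp_tr3 s t.
Proof.
  unfold trH3.
  rewrite (trace_cube_rank_one_sum kw (fun w => e * cos (dot (kw w) (lat_x s t, lat_y s t)))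
             (fun i j => Hf (feps e) i j (lat_x s t) (lat_y s t)))
    by (intros; apply Hf_feps).
  expand_lat.
Qed.

Lemma gradH2_lat e s t : gradH2 (feps e) (lat_x s t) (lat_y s t) = e ^ 2 * tp_eval tp_grad2 s t.
Proof.
  unfold gradH2.
  rewrite (norm_sq_rank_one_sum3 kw (fun w => - e * sin (dot (kw w) (lat_x s t, lat_y s t)))
             (fun i j k => pd k (Hf (feps e) i j) (lat_x s t) (lat_y s t)))
    by (intros; apply pd_Hf_feps).
  expand_lat.
Qed.

Lemma feps_lat e s t :
  feps e (lat_x s t) (lat_y s t) = exp (e * tp_eval tp_phi s t) / exp_avg tp_one e.
Proof. unfold feps. now rewrite phi_lat, Zeps_exp_avg. Qed.

Lemma Ifun_feps e : Ifun (feps e) = e * exp_avg tp_phi e / exp_avg tp_one e.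
Proof.
  unfold Ifun. rewrite avg_lat.
  rewrite (sq_int_ext _ (fun s t => e / exp_avg tp_one e
                                   * (tp_eval tp_phi s t * exp (e * tp_eval tp_phi s t))))
    by (intros; rewrite trH_lat, feps_lat; unfold Rdiv; ring).
  rewrite sq_int_scal by apply lip_bounded_exp_avg_integrand.
  unfold exp_avg, Rdiv. ring.
Qed.

Lemma Qfun_feps e : Qfun (feps e) = e ^ 2 * exp_avg tp_tr2 e / exp_avg tp_one e.
Proof.
  unfold Qfun. rewrite avg_lat.
  rewrite (sq_int_ext _ (fun s t => e ^ 2 / exp_avg tp_one e
                                   * (tp_eval tp_tr2 s t * exp (e * tp_eval tp_phi s t))))
    by (intros; rewrite trH2_lat, feps_lat; unfold Rdiv; ring).
  rewrite sq_int_scal by apply lip_bounded_exp_avg_integrand.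
  unfold exp_avg, Rdiv. ring.
Qed.

Lemma Dfun_feps e :
  Dfun (feps e) = (e ^ 2 * exp_avg tp_grad2 e + 2 * e ^ 3 * exp_avg tp_tr3 e) / exp_avg tp_one e.
Proof.
  unfold Dfun. rewrite avg_lat.
  rewrite (sq_int_ext _ (fun s t =>
      e ^ 2 / exp_avg tp_one e * (tp_eval tp_grad2 s t * exp (e * tp_eval tp_phi s t))
      + 2 * e ^ 3 / exp_avg tp_one e * (tp_eval tp_tr3 s t * exp (e * tp_eval tp_phi s t))))
    by (intros; rewrite gradH2_lat, trH3_lat, feps_lat; unfold Rdiv; ring).
  rewrite sq_int_plus by (apply lip_bounded_mult;
                           [apply lip_bounded_const | apply lip_bounded_exp_avg_integrand]).
  rewrite !sq_int_scal by apply lip_bounded_exp_avg_integrand.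
  unfold exp_avg, Rdiv. ring.
Qed.

(** * Asymptotics *)

Lemma exp_avg_expansion p n (v : R -> R) :
  (forall e, tp_int (tp_mul p (tp_exp_poly n (tp_scale e tp_phi))) = v e) ->
  bigO0 (fun e => exp_avg p e - v e) n.
Proof.
  intros Hv. apply (bigO0_ext _ (fun e => exp_avg p e
                                          - tp_int (tp_mul p (tp_exp_poly n (tp_scale e tp_phi))))).
  - intros e _. now rewrite Hv.
  - apply tp_exp_expansion.
Qed.

Ltac tp_compute :=
  intros;
  cbv [tp_phi tp_tr2 tp_tr3 tp_grad2 tp_sumw tp_cos tp_sin tp_one tp_exp_poly tp_pow
       tp_scale tp_mul mon_mul flat_map map app tp_int gram fact Nat.add Nat.mul INR];
  rewrite ?moment_0_0, ?moment_l_1, ?moment_1_r, ?moment_2_0, ?moment_0_2,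
    ?moment_3_0, ?moment_0_3;
  field.

Lemma exp_avg_one_expansion : bigO0 (fun e => exp_avg tp_one e - 1) 2.
Proof. apply exp_avg_expansion. tp_compute. Qed.

Lemma exp_avg_phi_expansion : bigO0 (fun e => exp_avg tp_phi e - (3/2 * e + 3/4 * e ^ 2)) 3.
Proof. apply exp_avg_expansion. tp_compute. Qed.

Lemma exp_avg_tr2_expansion : bigO0 (fun e => exp_avg tp_tr2 e - (3/2 + 3/8 * e)) 2.
Proof. apply exp_avg_expansion. tp_compute. Qed.

Lemma exp_avg_grad2_expansion : bigO0 (fun e => exp_avg tp_grad2 e - (3/2 + 3/16 * e)) 2.
Proof. apply exp_avg_expansion. tp_compute. Qed.

Lemma exp_avg_tr3_expansion : bigO0 (fun e => exp_avg tp_tr3 e - - 3/16) 1.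
Proof. apply exp_avg_expansion. tp_compute. Qed.

Lemma Ifun_expansion : bigO0 (fun e => Ifun (feps e) - (3/2 * e ^ 2 + 3/4 * e ^ 3)) 4.
Proof.
  apply (bigO0_ext _ (fun e => e * exp_avg tp_phi e / exp_avg tp_one e
                               - (3/2 * e ^ 2 + 3/4 * e ^ 3)));
    [intros; now rewrite Ifun_feps |].
  apply (bigO0_div_near_one _ _ _ 4 2 1);
    [| apply bigO0_quadratic_cubic | exact exp_avg_one_expansion | lia].
  apply (bigO0_ext _ (fun e => (1 * e ^ 1) * (exp_avg tp_phi e - (3/2 * e + 3/4 * e ^ 2))));
    [intros; ring |].
  exact (bigO0_mul _ _ 1 3 (bigO0_monomial 1 1) exp_avg_phi_expansion).
Qed.

Lemma Qfun_expansion : bigO0 (fun e => Qfun (feps e) - (3/2 * e ^ 2 + 3/8 * e ^ 3)) 4.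
Proof.
  apply (bigO0_ext _ (fun e => e ^ 2 * exp_avg tp_tr2 e / exp_avg tp_one e
                               - (3/2 * e ^ 2 + 3/8 * e ^ 3)));
    [intros; now rewrite Qfun_feps |].
  apply (bigO0_div_near_one _ _ _ 4 2 1);
    [| apply bigO0_quadratic_cubic | exact exp_avg_one_expansion | lia].
  apply (bigO0_ext _ (fun e => (1 * e ^ 2) * (exp_avg tp_tr2 e - (3/2 + 3/8 * e))));
    [intros; ring |].
  exact (bigO0_mul _ _ 2 2 (bigO0_monomial 1 2) exp_avg_tr2_expansion).
Qed.

Lemma Dfun_expansion : bigO0 (fun e => Dfun (feps e) - (3/2 * e ^ 2 - 3/16 * e ^ 3)) 4.
Proof.
  apply (bigO0_ext _ (fun e => (e ^ 2 * exp_avg tp_grad2 e + 2 * e ^ 3 * exp_avg tp_tr3 e)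
                                / exp_avg tp_one e - (3/2 * e ^ 2 + - 3/16 * e ^ 3)));
    [intros; rewrite Dfun_feps; field; apply Rgt_not_eq, exp_avg_one_pos |].
  apply (bigO0_div_near_one _ _ _ 4 2 1);
    [| apply bigO0_quadratic_cubic | exact exp_avg_one_expansion | lia].
  apply (bigO0_ext _ (fun e => (1 * e ^ 2) * (exp_avg tp_grad2 e - (3/2 + 3/16 * e))
                               + (2 * e ^ 3) * (exp_avg tp_tr3 e - - 3/16)));
    [intros; field |].
  apply bigO0_add.
  - exact (bigO0_mul _ _ 2 2 (bigO0_monomial 1 2) exp_avg_grad2_expansion).
  - exact (bigO0_mul _ _ 3 1 (bigO0_monomial 2 3) exp_avg_tr3_expansion).
Qed.

Section NormalizedExpansions.

Variables i d q : R -> R.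
Hypothesis i_expansion : bigO0 (fun e => i e - (3/2 + 3/4 * e)) 2.
Hypothesis d_expansion : bigO0 (fun e => d e - (3/2 - 3/16 * e)) 2.
Hypothesis q_expansion : bigO0 (fun e => q e - (3/2 + 3/8 * e)) 2.

Lemma prod_sub_sq_expansion : bigO0 (fun e => i e * d e - q e ^ 2 + 9/32 * e) 2.
Proof.
  set (x e := i e - (3/2 + 3/4 * e)). set (y e := d e - (3/2 - 3/16 * e)).
  set (z e := q e - (3/2 + 3/8 * e)).
  apply (bigO0_ext _ (fun e => - 9/32 * e ^ 2 + x e * (3/2 + - 3/16 * e) + (3/2 + 3/4 * e) * y e
                               + x e * y e - (2 * (3/2 + 3/8 * e) + z e) * z e));
    [intros e _; unfold x, y, z; field |].
  apply bigO0_sub; [repeat apply bigO0_add |].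
  - apply bigO0_monomial.
  - exact (bigO0_mul _ _ 2 0 i_expansion (bigO0_affine _ _)).
  - exact (bigO0_mul _ _ 0 2 (bigO0_affine _ _) d_expansion).
  - apply (bigO0_weaken _ (2 + 2)); [lia | exact (bigO0_mul _ _ 2 2 i_expansion d_expansion)].
  - apply (bigO0_mul _ _ 0 2); [apply bigO0_add | exact q_expansion].
    + apply (bigO0_ext _ (fun e => 3 + 3/4 * e)); [intros; field | apply bigO0_affine].
    + apply (bigO0_weaken _ 2); [lia | exact q_expansion].
Qed.

Lemma prod_div_sq_expansion : bigO0 (fun e => i e * d e / q e ^ 2 - (1 - 1/8 * e)) 2.
Proof.
  assert (Hq1 : bigO0 (fun e => q e - 3/2) 1).
  { apply (bigO0_ext _ (fun e => (q e - (3/2 + 3/8 * e)) + 3/8 * e ^ 1)); [intros; ring |].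
    apply bigO0_add; [apply (bigO0_weaken _ 2); [lia | exact q_expansion] | apply bigO0_monomial]. }
  assert (Hq2 : bigO0 (fun e => q e ^ 2 - 9/4) 1).
  { apply (bigO0_ext _ (fun e => (q e - 3/2) * ((q e - 3/2) + 3 * e ^ 0))); [intros; field |].
    apply (bigO0_mul _ _ 1 0 Hq1). apply bigO0_add; [| apply bigO0_monomial].
    apply (bigO0_weaken _ 1); [lia | exact Hq1]. }
  assert (H94 : 9/4 <> 0) by lra.
  destruct (bigO0_away_from_zero _ _ 0 H94 Hq2) as [r [Hr Hqr]].
  apply bigO0_ext_near with
    (g := fun e => (i e * d e - q e ^ 2 + 9/32 * e + 1/8 * e ^ 1 * (q e ^ 2 - 9/4)) * / q e ^ 2).
  { exists r. split; [exact Hr |]. intros e He. specialize (Hqr e He).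
    assert (q e <> 0).
    { intros H0. rewrite H0, pow_i, Rabs_R0, Rabs_pos_eq in Hqr by (lia || lra). lra. }
    field. assumption. }
  apply (bigO0_mul _ _ 2 0); [apply bigO0_add | exact (bigO0_inv _ _ 0 H94 Hq2)].
  - exact prod_sub_sq_expansion.
  - exact (bigO0_mul _ _ 1 1 (bigO0_monomial _ _) Hq2).
Qed.

End NormalizedExpansions.

Lemma Ifun_normalized : bigO0 (fun e => Ifun (feps e) / e ^ 2 - (3/2 + 3/4 * e)) 2.
Proof.
  apply (bigO0_ext _ (fun e => (Ifun (feps e) - (3/2 * e ^ 2 + 3/4 * e ^ 3)) / e ^ 2));
    [intros e He; field; exact He | exact (bigO0_div_pow _ 2 2 Ifun_expansion)].
Qed.

Lemma Qfun_normalized : bigO0 (fun e => Qfun (feps e) / e ^ 2 - (3/2 + 3/8 * e)) 2.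
Proof.
  apply (bigO0_ext _ (fun e => (Qfun (feps e) - (3/2 * e ^ 2 + 3/8 * e ^ 3)) / e ^ 2));
    [intros e He; field; exact He | exact (bigO0_div_pow _ 2 2 Qfun_expansion)].
Qed.

Lemma Dfun_normalized : bigO0 (fun e => Dfun (feps e) / e ^ 2 - (3/2 - 3/16 * e)) 2.
Proof.
  apply (bigO0_ext _ (fun e => (Dfun (feps e) - (3/2 * e ^ 2 - 3/16 * e ^ 3)) / e ^ 2));
    [intros e He; field; exact He | exact (bigO0_div_pow _ 2 2 Dfun_expansion)].
Qed.

Lemma IfunDfun_sub_Qfun_sq_expansion :
  bigO0 (fun e => Ifun (feps e) * Dfun (feps e) - Qfun (feps e) ^ 2 - (- (9/32) * e ^ 5)) 6.
Proof.
  apply (bigO0_ext _ (fun e => (1 * e ^ 4) * ((Ifun (feps e) / e ^ 2) * (Dfun (feps e) / e ^ 2)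
                                             - (Qfun (feps e) / e ^ 2) ^ 2 + 9/32 * e)));
    [intros e He; field; exact He |].
  apply (bigO0_mul _ _ 4 2); [apply bigO0_monomial |].
  exact (prod_sub_sq_expansion _ _ _ Ifun_normalized Dfun_normalized Qfun_normalized).
Qed.

Lemma IfunDfun_div_Qfun_sq_expansion :
  bigO0 (fun e => Ifun (feps e) * Dfun (feps e) / Qfun (feps e) ^ 2 - (1 - 1/8 * e)) 2.
Proof.
  apply (bigO0_ext _ (fun e => (Ifun (feps e) / e ^ 2) * (Dfun (feps e) / e ^ 2)
                               / (Qfun (feps e) / e ^ 2) ^ 2 - (1 - 1/8 * e))).
  - intros e He. destruct (Req_dec (Qfun (feps e)) 0) as [HQ | HQ].
    + (* Both sides divide by 0, whose inverse is 0. *)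
      rewrite HQ. unfold Rdiv. rewrite Rmult_0_l, pow_i, Rinv_0 by lia. ring.
    + field. split; assumption.
  - exact (prod_div_sq_expansion _ _ _ Ifun_normalized Dfun_normalized Qfun_normalized).
Qed.

Theorem proposition3p2 :
  bigO0 (fun e => Ifun (feps e) - (3/2 * e^2 + 3/4 * e^3)) 4 /\
  bigO0 (fun e => Qfun (feps e) - (3/2 * e^2 + 3/8 * e^3)) 4 /\
  bigO0 (fun e => Dfun (feps e) - (3/2 * e^2 - 3/16 * e^3)) 4 /\
  bigO0 (fun e => Ifun (feps e) * Dfun (feps e) - Qfun (feps e) ^ 2
                  - (- (9/32) * e^5)) 6 /\
  bigO0 (fun e => Ifun (feps e) * Dfun (feps e) / Qfun (feps e) ^ 2
                  - (1 - 1/8 * e)) 2 /\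
  (exists delta : R, 0 < delta /\
     forall e, 0 < e < delta ->
       Ifun (feps e) * Dfun (feps e) - Qfun (feps e) ^ 2 < 0).
Proof.
  split; [exact Ifun_expansion |].
  split; [exact Qfun_expansion |].
  split; [exact Dfun_expansion |].
  split; [exact IfunDfun_sub_Qfun_sq_expansion |].
  split; [exact IfunDfun_div_Qfun_sq_expansion |].
  apply (eventually_neg_of_bigO0 _ (- (9/32)) 5); [lra | exact IfunDfun_sub_Qfun_sq_expansion].
Qed.
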